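(* Let $G$ be a connected graph with $n$ vertices and $m$ edges. If either $n=13$ and $24\le m\le 78$, or $n=14$ and $23\le m\le 91$, then $\frac{q(G)}{R(G)}<\frac{n}{\sqrt{n-1}}$.
   Context: All graphs are finite and simple. For a vertex $u$, $d(u)$ is its degree. The Randić index is $R(G)=\sum_{\{u,v\}\in E(G)} \frac{1}{\sqrt{d(u)d(v)}}$. The signless Laplacian is $Q=D+A$ ($D$ the diagonal degree matrix, $A$ the adjacency matrix), and $q(G)$ is its largest eigenvalue. *)

From HB Require Import structures.
From mathcomp Require Import all_boot all_order all_algebra.
Set Implicit Arguments. Unset Strict Implicit. Unset Printing Implicit Defensive.
Import Order.TTheory GRing.Theory Num.Theory.
Local Open Scope ring_scope.

Definition simple_graph (n : nat) (e : rel 'I_n) : Prop :=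
  symmetric e /\ irreflexive e.

Definition connected_graph (n : nat) (e : rel 'I_n) : Prop :=
  forall x y : 'I_n, connect e x y.

Definition deg (n : nat) (e : rel 'I_n) (u : 'I_n) : nat := #|[set v | e u v]|.

Definition nedges (n : nat) (e : rel 'I_n) : nat :=
  #|[set p : 'I_n * 'I_n | (p.1 < p.2)%N && e p.1 p.2]|.

Definition randic (R : rcfType) (n : nat) (e : rel 'I_n) : R :=
  \sum_(u : 'I_n) \sum_(v : 'I_n | (u < v)%N && e u v)
     (Num.sqrt ((deg e u)%:R * (deg e v)%:R))^-1.

Definition signless_laplacian (R : rcfType) (n : nat) (e : rel 'I_n) : 'M[R]_n :=
  \matrix_(i, j) ((if i == j then (deg e i)%:R else 0) + (e i j)%:R).

Definition largest_eigenvalue (R : rcfType) (n : nat) (M : 'M[R]_n) (q : R) : Prop :=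
  eigenvalue M q /\ forall a : R, eigenvalue M a -> a <= q.

From HB Require Import structures.
From mathcomp Require Import all_boot all_order all_algebra.
From mathcomp Require Import ring lra zify.
Set Implicit Arguments. Unset Strict Implicit. Unset Printing Implicit Defensive.
Import Order.TTheory GRing.Theory Num.Theory.
Local Open Scope ring_scope.

(* On the spectral side, evaluating an eigenvector v of Q at a vertex i that
   maximises |v_i| / d_i gives q <= d_i + m_i, m_i the average degree of the
   neighbours of i; bounding their degree sum both by d_i (n - 1) and by
   2m - n + 1 turns this into q <= 2m / (n - 1) + n - 2.  On the Randic side,
   an inequality 1 / sqrt (a b) >= al (1/a + 1/b) + be for all degrees
   1 <= a, b <= n - 1, summed over the edges (where the 1/d_u + 1/d_v add up
   to n), gives R(G) >= al n + be m.  With (al, be) = (24, 5) / 108 for n = 13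
   and (39, 8) / 182 for n = 14, comparing the two bounds is a quadratic
   inequality in m on the given range. *)

Lemma sqr_add_le_edge_bound (R : realFieldType) (D S M N : R) :
  1 <= D -> D <= N - 1 -> 2 <= N ->
  S <= D * (N - 1) -> S <= 2 * M - N + 1 ->
  D * D + S <= D * (2 * M / (N - 1) + N - 2).
Proof.
move=> D1 DN N2 S1 S2.
have N1 : 0 < N - 1 by lra.
set K := 2 * M / (N - 1).
have KM : K * (N - 1) = 2 * M by rewrite /K mulfVK // gt_eqF.
rewrite -(ler_pM2l N1).
have [h|h] := lerP ((N - 1) * (D + 1)) (2 * M).
- have : D * ((N - 1) * (D + 1)) <= D * (2 * M) by apply: ler_wpM2l; lra.
  rewrite -KM; nra.
- have h1 : 0 <= (N - 1) - D by lra.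
  have h2 : 0 <= (N - 1) * D - (2 * M - N + 1) by lra.
  have := mulr_ge0 h1 h2.
  rewrite -KM; nra.
Qed.

Lemma inv_sqrt_mul_ge (R : rcfType) (a b c1 c2 D : nat) :
  (0 < a)%N -> (0 < b)%N -> (0 < D)%N ->
  ((c1 * (a + b) + c2 * a * b) ^ 2 <= a * b * D ^ 2)%N ->
  c1%:R / D%:R * (a%:R^-1 + b%:R^-1) + c2%:R / D%:R <= (Num.sqrt (a%:R * b%:R))^-1 :> R.
Proof.
rewrite -!(ltr0n R) -(ler_nat R) !(natrX, natrD, natrM) => a0 b0 D0 H.
set x := Num.sqrt (a%:R * b%:R : R).
have ab0 : 0 < a%:R * b%:R :> R by rewrite mulr_gt0.
have xx : x * x = a%:R * b%:R by rewrite -expr2 sqr_sqrtr // ltW.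
have x0 : 0 < x by rewrite sqrtr_gt0.
set T := (c1%:R * (a%:R + b%:R) + c2%:R * a%:R * b%:R) / D%:R : R.
have T0 : 0 <= T by rewrite divr_ge0 ?ler0n // addr_ge0 // ?mulr_ge0 ?ler0n ?addr_ge0.
have TT : T * T <= x * x by rewrite xx /T -expr2 expr_div_n ler_pdivrMr ?exprn_gt0.
have Tx : T <= x by nra.
have -> : c1%:R / D%:R * (a%:R^-1 + b%:R^-1) + c2%:R / D%:R = T / (x * x).
  by rewrite xx /T; field; rewrite !gt_eqF.
by rewrite ler_pdivrMr ?mulr_gt0 // mulrA mulVf ?gt_eqF // mul1r.
Qed.

Lemma ratio_lt_of_bounds (R : realFieldType) (q r K L s N : R) :
  q <= K -> L <= r -> 0 < L -> 0 <= K -> 0 < s -> K * s < N * L -> q / r < N / s.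
Proof.
move=> qK Lr L0 K0 s0 key.
have r0 : 0 < r by apply: lt_le_trans Lr.
apply: (le_lt_trans (y := K / L)).
  apply: (le_trans (y := K / r)); first by rewrite ler_pM2r ?invr_gt0.
  by rewrite ler_pdivrMr // mulrAC ler_pdivlMr // ler_wpM2l.
by rewrite ltr_pdivrMr // mulrAC ltr_pdivlMr.
Qed.

Lemma mul_sqrt_lt (R : rcfType) (K L p : R) :
  0 <= K -> 0 < L -> 0 < p -> K ^+ 2 * p < L ^+ 2 -> K * Num.sqrt p < L.
Proof.
move=> K0 L0 p0 H.
have ss : Num.sqrt p ^+ 2 = p by rewrite sqr_sqrtr ?ltW.
rewrite -ss -exprMn in H.
by rewrite -(@ltr_pXn2r _ 2%N) ?nnegrE ?mulr_ge0 ?sqrtr_ge0 ?(ltW L0).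
Qed.

Section SimpleGraph.
Variables (R : rcfType) (n : nat) (e : rel 'I_n).
Hypothesis He : simple_graph e.

Local Notation d u := ((deg e u)%:R : R).
Local Notation m := ((nedges e)%:R : R).

Lemma sum_edges_ends (F : 'I_n -> R) :
  \sum_(u : 'I_n) \sum_(v : 'I_n | (u < v)%N && e u v) (F u + F v) =
  \sum_(u : 'I_n) d u * F u.
Proof.
case: He => esym eirr.
under eq_bigr do rewrite big_split /=.
rewrite big_split /= [X in _ + X](exchange_big_dep xpredT) //= -big_split /=.
apply: eq_bigr => u _.
rewrite mulr_natl -sumr_const [RHS](bigID (fun v : 'I_n => (u < v)%N)) /=.
congr (_ + _); apply: eq_bigl => v; rewrite inE; first by rewrite andbC.
rewrite (esym v u) -leqNgt; case euv: (e u v); rewrite ?andbF ?andbT //=.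
rewrite ltn_neqAle val_eqE; case: eqVneq => [vu|//].
by rewrite vu eirr in euv.
Qed.

Lemma nedges_sum : m = \sum_(u : 'I_n) \sum_(v : 'I_n | (u < v)%N && e u v) 1.
Proof.
rewrite /nedges pair_big_dep /= sumr_const; congr (_ *+ _).
by apply: eq_card => p; rewrite inE.
Qed.

Lemma handshake : \sum_(u : 'I_n) d u = 2 * m.
Proof.
rewrite -[LHS](eq_bigr _ (fun u _ => mulr1 _)) -sum_edges_ends nedges_sum mulr_sumr.
by apply: eq_bigr => u _; rewrite mulr_sumr; apply: eq_bigr => v _; rewrite mulr_natl.
Qed.

Lemma sum_adj (u : 'I_n) : \sum_(v | e u v) 1 = d u.
Proof. by rewrite /deg -sum1_card natr_sum; apply: eq_bigl => v; rewrite inE. Qed.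

Lemma deg_le_pred (u : 'I_n) : (deg e u <= n.-1)%N.
Proof.
case: He => _ eirr.
rewrite /deg -[n in (_ <= n.-1)%N]card_ord -(cardsC1 u).
apply: subset_leq_card; apply/subsetP => v; rewrite !inE.
by apply: contraTneq => ->; rewrite eirr.
Qed.

Lemma sum_adj_deg_le_mul (i : 'I_n) : \sum_(j | e i j) d j <= d i * (n.-1)%:R.
Proof.
rewrite -sum_adj mulr_suml; apply: ler_sum => j _.
by rewrite mul1r ler_nat deg_le_pred.
Qed.

Lemma signless_laplacian_mulmx (v : 'rV[R]_n) (i : 'I_n) :
  (v *m signless_laplacian R e) 0 i = v 0 i * d i + \sum_(j | e i j) v 0 j.
Proof.
case: He => esym _.
rewrite !mxE; under eq_bigr do rewrite mxE mulrDr.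
rewrite big_split /=; congr (_ + _).
  by rewrite (bigD1 i) //= eqxx big1 ?addr0 // => j /negbTE ->; rewrite mulr0.
by rewrite [RHS]big_mkcond; apply: eq_bigr => j _; rewrite esym; case: (e i j); rewrite ?mulr1 ?mulr0.
Qed.

Hypothesis Hc : connected_graph e.
Hypothesis Hn : (1 < n)%N.

Lemma deg_gt0 (u : 'I_n) : (0 < deg e u)%N.
Proof.
have [w wu] : exists w : 'I_n, w != u.
  case: (eqVneq (u : nat) 0%N) => h.
    by exists (Ordinal Hn); apply/eqP => /(congr1 val) /=; rewrite h.
  by exists (Ordinal (ltnW Hn)); apply/eqP => /(congr1 val) /= h'; rewrite -h' in h.
have /connectP [[|x p] /= pp wl] := Hc u w; first by rewrite wl eqxx in wu.
by case/andP: pp => eux _; apply/card_gt0P; exists x; rewrite inE.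
Qed.

Lemma deg_pos (u : 'I_n) : 0 < d u.
Proof. by rewrite ltr0n deg_gt0. Qed.

(* The n - d_i non-neighbours of i (i itself included) all have degree at
   least 1, and i has degree d_i. *)
Lemma sum_adj_deg_le_edges (i : 'I_n) : \sum_(j | e i j) d j <= 2 * m - n%:R + 1.
Proof.
case: He => _ eirr.
have nonadj_card : \sum_(j | ~~ e i j) 1 = n%:R - d i.
  have : \sum_(j : 'I_n) 1 = n%:R :> R by rewrite sumr_const card_ord.
  by rewrite (bigID (e i)) /= sum_adj; lra.
have nonadj_excess : d i - 1 <= \sum_(j | ~~ e i j) (d j - 1).
  rewrite (bigD1 i) ?eirr //= lerDl; apply: sumr_ge0 => j _.
  by rewrite subr_ge0 ler1n deg_gt0.
have := handshake; rewrite (bigID (e i)) /=.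
move: nonadj_excess; rewrite sumrB nonadj_card; lra.
Qed.

Lemma signless_eigenvalue_vertex_bound (a : R) :
  eigenvalue (signless_laplacian R e) a ->
  exists i, `|a| * d i <= d i * d i + \sum_(j | e i j) d j.
Proof.
move/eigenvalueP => [v hv v0].
have [j0 vj0] : exists j, v 0 j != 0.
  apply/existsP; apply: contraNT v0 => /existsPn v0.
  by apply/eqP/matrixP => i j; rewrite (ord1 i) mxE; apply/eqP/negbNE/v0.
pose w j := `|v 0 j| / d j.
have [i _ Hi] := @arg_maxP _ R 'I_n j0 xpredT w isT.
have wpos : 0 < w i.
  by apply: lt_le_trans (Hi j0 isT); rewrite divr_gt0 ?normr_gt0 ?deg_pos.
exists i; rewrite -(ler_pM2l wpos).
have vi : `|v 0 i| = w i * d i by rewrite mulfVK // gt_eqF // deg_pos.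
have Eq := congr1 (fun M : 'rV[R]_n => M 0 i) hv.
rewrite /= signless_laplacian_mulmx mxE in Eq.
suff : `|a| * `|v 0 i| <= `|v 0 i| * d i + w i * \sum_(j | e i j) d j.
  by rewrite vi; lra.
rewrite -normrM -Eq mulr_sumr; apply: le_trans (ler_normD _ _) _.
rewrite normrM (ger0_norm (ltW (deg_pos i))) lerD2l.
apply: le_trans (ler_norm_sum _ _ _) _; apply: ler_sum => j _.
by rewrite -ler_pdivrMr ?deg_pos //; apply: Hi.
Qed.

Lemma signless_eigenvalue_le (a : R) :
  eigenvalue (signless_laplacian R e) a -> a <= 2 * m / (n.-1)%:R + n%:R - 2.
Proof.
case/signless_eigenvalue_vertex_bound => i ha.
have hn : (n.-1)%:R = n%:R - 1 :> R.
  by rewrite -[in RHS](prednK (ltnW Hn)) -natr1 addrK.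
have := sqr_add_le_edge_bound (D := d i) (S := \sum_(j | e i j) d j) (M := m) (N := n%:R).
rewrite -hn ler1n deg_gt0 ler_nat deg_le_pred ler_nat Hn sum_adj_deg_le_mul.
move=> /(_ isT isT isT isT (sum_adj_deg_le_edges i)) bound.
apply: le_trans (ler_norm a) _; rewrite -(ler_pM2r (deg_pos i)).
by apply: le_trans ha _; lra.
Qed.

Lemma randic_ge_linear (al be : R) :
  (forall a b : nat, (0 < a <= n.-1)%N -> (0 < b <= n.-1)%N ->
     al * (a%:R^-1 + b%:R^-1) + be <= (Num.sqrt (a%:R * b%:R))^-1) ->
  al * n%:R + be * m <= randic R e.
Proof.
move=> per_edge.
have -> : al * n%:R + be * m =
  \sum_(u : 'I_n) \sum_(v : 'I_n | (u < v)%N && e u v) (al * ((d u)^-1 + (d v)^-1) + be).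
  have -> : n%:R = \sum_(u : 'I_n) d u * (d u)^-1.
    by rewrite -[n in n%:R]card_ord -sumr_const; apply: eq_bigr => u _; rewrite mulfV ?gt_eqF ?deg_pos.
  rewrite -sum_edges_ends nedges_sum !mulr_sumr -big_split /=; apply: eq_bigr => u _.
  by rewrite !mulr_sumr -big_split /=; apply: eq_bigr => v _; rewrite mulr1.
by apply: ler_sum => u _; apply: ler_sum => v _; apply: per_edge; rewrite deg_gt0 deg_le_pred.
Qed.

Lemma signless_randic_ratio_lt (c1 c2 D : nat) (q : R) :
  (0 < D)%N ->
  (forall a b : nat, (0 < a <= n.-1)%N -> (0 < b <= n.-1)%N ->
     (c1 * (a + b) + c2 * a * b) ^ 2 <= a * b * D ^ 2)%N ->
  (((2 * nedges e + n.-2 * n.-1) * D) ^ 2 < n ^ 2 * n.-1 * (c1 * n + c2 * nedges e) ^ 2)%N ->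
  largest_eigenvalue (signless_laplacian R e) q ->
  q / randic R e < n%:R / Num.sqrt (n.-1)%:R.
Proof.
(* [key] is (n - 1) K^2 < n^2 L^2 with denominators cleared, where K and L
   are the upper bound on q and the lower bound on R(G) used below. *)
move=> D0 per_edge key [Hq _].
set p : R := (n.-1)%:R; set N : R := n%:R.
have p0 : 0 < p by rewrite ltr0n -subn1 subn_gt0.
have hp2 : (n.-2)%:R = N - 2 :> R by rewrite -subn2 natrB.
have D0' : 0 < D%:R :> R by rewrite ltr0n.
set K := 2 * m / p + N - 2.
set L := c1%:R / D%:R * N + c2%:R / D%:R * m.
have KpE : K * p = 2 * m + (N - 2) * p by rewrite /K; field; rewrite gt_eqF.
have LDE : L * D%:R = c1%:R * N + c2%:R * m by rewrite /L; field; rewrite gt_eqF.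
move: key; rewrite -(ltr_nat R) !(natrX, natrM, natrD) hp2 -/p -/N -KpE -LDE => key.
have N2 : 2 <= N by rewrite ler_nat.
have L_ge0 : 0 <= L by rewrite /L addr_ge0 // mulr_ge0 ?divr_ge0.
have L0 : 0 < L.
  rewrite lt_def L_ge0 andbT; apply: contraTneq key => ->.
  by rewrite mul0r expr0n mulr0 -leNgt sqr_ge0.
have K0 : 0 <= K.
  by rewrite -(pmulr_lge0 _ p0) KpE addr_ge0 ?mulr_ge0 ?ler0n ?subr_ge0 ?(ltW p0).
have qK : q <= K := signless_eigenvalue_le Hq.
apply: (ratio_lt_of_bounds qK _ L0 K0).
- apply: randic_ge_linear => a b ha hb.
  apply: inv_sqrt_mul_ge (per_edge a b ha hb) => //; [exact: (andP ha).1 | exact: (andP hb).1].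
- by rewrite sqrtr_gt0.
apply: (mul_sqrt_lt K0 _ p0); first by rewrite mulr_gt0 // (lt_le_trans _ N2).
have pD2 : 0 < p * D%:R ^+ 2 by rewrite mulr_gt0 ?exprn_gt0.
rewrite -(ltr_pM2r pD2).
have -> : K ^+ 2 * p * (p * D%:R ^+ 2) = (K * p * D%:R) ^+ 2 by ring.
by have -> : (N * L) ^+ 2 * (p * D%:R ^+ 2) = N ^+ 2 * p * (L * D%:R) ^+ 2 by ring.
Qed.

End SimpleGraph.

Lemma pair_bound_13 (a b : nat) : (0 < a <= 12)%N -> (0 < b <= 12)%N ->
  ((24 * (a + b) + 5 * a * b) ^ 2 <= a * b * 108 ^ 2)%N.
Proof.
move=> /andP[a0 a12] /andP[b0 b12].
do 13?[case: a a0 a12 => [|a] a0 a12]; try lia;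
do 13?[case: b b0 b12 => [|b] b0 b12]; lia.
Qed.

Lemma pair_bound_14 (a b : nat) : (0 < a <= 13)%N -> (0 < b <= 13)%N ->
  ((39 * (a + b) + 8 * a * b) ^ 2 <= a * b * 182 ^ 2)%N.
Proof.
move=> /andP[a0 a13] /andP[b0 b13].
do 14?[case: a a0 a13 => [|a] a0 a13]; try lia;
do 14?[case: b b0 b13 => [|b] b0 b13]; lia.
Qed.

Theorem lemma3p2 (R : rcfType) (n : nat) (e : rel 'I_n) (q : R) :
  simple_graph e -> connected_graph e ->
  ((n = 13%N /\ (24 <= nedges e <= 78)%N) \/ (n = 14%N /\ (23 <= nedges e <= 91)%N)) ->
  largest_eigenvalue (signless_laplacian R e) q ->
  q / randic R e < n%:R / Num.sqrt (n.-1)%:R.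
Proof.
move=> He Hc [[hn /andP[m_lo m_hi]] | [hn /andP[m_lo m_hi]]] Hq; subst n.
- apply: (signless_randic_ratio_lt He Hc isT _ pair_bound_13 _ Hq) => //=; nia.
- apply: (signless_randic_ratio_lt He Hc isT _ pair_bound_14 _ Hq) => //=; nia.
Qed.
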